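(* Let $1/n\ll \eta \ll \mu$. Let $K_{2n+1}$ be 2-factorized. Suppose that $V_0\subseteq V(K_{2n+1})$ and $D_0\subseteq C(K_{2n+1})$ are $\mu$-random subsets which are independent of each other. Then, with high probability, for each pair of distinct vertices $u,v\in V(K_{2n+1})$, there are at least $\eta n$ colours $c\in D_0$ such that both $u$ and $v$ have a neighbour in $V_0$ joined to them by an edge of colour $c$.
   Context: A 2-factorization of $K_{2n+1}$ is an edge-colouring in which every vertex is incident to exactly 2 edges of each colour; $C(K_{2n+1})$ is its colour set. A $q$-random subset of a finite set contains each element independently with probability $q$. ''With high probability'': with probability $1-o(1)$ as $n\to\infty$. $a\ll b$ means the statement holds whenever $a\le b^C/C$ for a suitable fixed absolute constant $C$; $1/n\ll\cdots$ entails $n$ large. *)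

From HB Require Import structures.
From mathcomp Require Import all_boot all_order all_algebra.
From mathcomp Require Import reals.
Set Implicit Arguments. Unset Strict Implicit. Unset Printing Implicit Defensive.
Import Order.TTheory GRing.Theory Num.Theory.
Local Open Scope ring_scope.

Definition vert (n : nat) := 'I_(2 * n + 1).

(* An edge-colouring of K_{2n+1} with colour set C, given as a symmetric
   function on pairs of distinct vertices (the value on the diagonal is
   irrelevant). *)
Definition two_factorization (n : nat) (C : finType)
    (col : vert n -> vert n -> C) : Prop :=
  (forall u v : vert n, u != v -> col u v = col v u) /\
  (forall (u : vert n) (c : C),
      #|[set v : vert n | (v != u) && (col u v == c)]| = 2%N).

(* Probability that a q-random subset of T equals A. *)
Definition qweight (R : realType) (T : finType) (q : R) (A : {set T}) : R :=
  q ^+ #|A| * (1 - q) ^+ (#|T| - #|A|).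

Definition has_col_nbr (n : nat) (C : finType) (col : vert n -> vert n -> C)
    (V0 : {set vert n}) (u : vert n) (c : C) : bool :=
  [exists x in V0, (x != u) && (col u x == c)].

Definition good_event (R : realType) (n : nat) (C : finType)
    (col : vert n -> vert n -> C) (eta : R)
    (V0 : {set vert n}) (D0 : {set C}) : bool :=
  [forall u : vert n, forall v : vert n, (u != v) ==>
     (eta * n%:R <=
      (#|[set c in D0 | has_col_nbr col V0 u c && has_col_nbr col V0 v c]|)%:R)].

Definition prob_good (R : realType) (n : nat) (C : finType)
    (col : vert n -> vert n -> C) (mu eta : R) : R :=
  \sum_(V0 : {set vert n}) \sum_(D0 : {set C})
     qweight mu V0 * qweight mu D0 * (good_event col eta V0 D0)%:R.

From HB Require Import structures.
From mathcomp Require Import all_boot all_order all_algebra.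
From mathcomp Require Import reals.
From mathcomp Require Import ring lra zify.
Import Order.TTheory GRing.Theory Num.Theory.
Local Open Scope ring_scope.
Set Implicit Arguments. Unset Strict Implicit. Unset Printing Implicit Defensive.

(* Fix vertices u, v.  For each colour c pick a c-neighbour x_c of u and a
   c-neighbour y_c <> x_c of v.  Discarding greedily the colours whose pair
   {x_c, y_c} meets another one keeps at least n/3 colours with pairwise
   disjoint pairs, so the events "c \in D0 and x_c, y_c \in V0" over these
   colours are independent, each of probability mu^3.  Hence their number Z
   satisfies E[2^-Z] = (1 - mu^3/2)^(n/3), and by Markov's inequality
   Z < eta n has probability at most 2^-(n/(3m)) for a suitable constant m;
   this beats the union bound over the (2n+1)^2 pairs u, v. *)

Section RandomSubset.
Variables (R : realType) (T : finType) (q : R).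

Definition qexpect (F : {set T} -> R) : R := \sum_(A : {set T}) qweight q A * F A.

Lemma eq_qexpect (F G : {set T} -> R) : F =1 G -> qexpect F = qexpect G.
Proof. by move=> eqFG; apply: eq_bigr => A _; rewrite eqFG. Qed.

Lemma qexpectZ (k : R) (F : {set T} -> R) :
  qexpect (fun A => k * F A) = k * qexpect F.
Proof. by rewrite /qexpect mulr_sumr; apply: eq_bigr => A _; rewrite mulrCA. Qed.

Lemma qexpectB (F G : {set T} -> R) :
  qexpect (fun A => F A - G A) = qexpect F - qexpect G.
Proof. by rewrite /qexpect -sumrB; apply: eq_bigr => A _; rewrite mulrBr. Qed.

Lemma qexpect_sum (I : finType) (F : I -> {set T} -> R) :
  qexpect (fun A => \sum_(i : I) F i A) = \sum_(i : I) qexpect (F i).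
Proof. by rewrite /qexpect; under eq_bigr do rewrite mulr_sumr; rewrite exchange_big. Qed.

(* The weights sum to ((1 - q) + q) ^+ #|T| = 1 by the binomial theorem. *)
Lemma qexpect_const (k : R) : qexpect (fun _ => k) = k.
Proof.
have -> : qexpect (fun _ => k) = k * qexpect (fun _ => 1).
  by rewrite -qexpectZ; apply: eq_qexpect => A; rewrite mulr1.
rewrite -[RHS]mulr1; congr (_ * _).
rewrite /qexpect; under eq_bigr do rewrite mulr1.
rewrite -[1 in RHS](expr1n _ #|T|) -[1 in RHS](subrK q) exprDn.
rewrite (partition_big (fun A : {set T} => inord #|A| : 'I_#|T|.+1) predT) //=.
apply: eq_bigr => i _; have cardA (A : {set T}) : (#|A| < #|T|.+1)%N by rewrite ltnS; apply: max_card.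
rewrite (eq_bigr (fun _ => (1 - q) ^+ (#|T| - i) * q ^+ i)); last first.
  by move=> A /eqP <-; rewrite /qweight inordK // mulrC.
rewrite sumr_const -(card_draws T i); congr (_ *+ _); apply: eq_card => A.
by rewrite !inE unfold_in /= inordK.
Qed.

Lemma qweightU1 (x : T) (A : {set T}) : x \notin A ->
  q * qweight q A = (1 - q) * qweight q (x |: A).
Proof.
move=> xA; rewrite /qweight cardsU1 xA add1n.
have : (#|A|.+1 <= #|T|)%N by have := max_card (x |: A); rewrite cardsU1 xA.
move=> /subnSK <-; rewrite !exprS; ring.
Qed.

Lemma big_setU1_pairs (G : {set T} -> R) (x : T) :
  \sum_(A : {set T}) G A = \sum_(A : {set T} | x \notin A) (G A + G (x |: A)).
Proof.
rewrite (bigID (fun A : {set T} => x \in A)) /= addrC big_split /=; congr (_ + _).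
rewrite (reindex_onto (fun A => x |: A) (fun A => A :\ x)) /=; last first.
  by move=> A xA; rewrite setD1K.
apply: eq_bigl => A; rewrite setU11 /=.
have [xA | xA] := boolP (x \in A); last by rewrite setU1K // eqxx.
by apply/negbTE/eqP => AxA; move: xA; rewrite -AxA setD11.
Qed.

Lemma qexpect_cond (x : T) (F : {set T} -> R) :
  qexpect F = q * qexpect (fun A => F (x |: A)) + (1 - q) * qexpect (fun A => F (A :\ x)).
Proof.
rewrite /qexpect !mulr_sumr (big_setU1_pairs _ x) -big_split (big_setU1_pairs _ x) /=.
apply: eq_bigr => A xA; rewrite setUA setUid setU1K //.
have -> : A :\ x = A by apply/setDidPl; rewrite disjoint_sym disjoints1.
have := qweightU1 xA; set w := qweight q A; set w' := qweight q (x |: A) => ew.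
set F0 := F A; set F1 := F (x |: A).
have -> : w * F0 + w' * F1 = q * (w * F1) + (1 - q) * (w * F0) + (q * (w' * F1) + (1 - q) * (w' * F0))
                             + (F0 - F1) * (q * w - (1 - q) * w') by ring.
by rewrite ew subrr mulr0 addr0.
Qed.

Lemma qexpect_mem (x : T) (f : bool -> R) :
  qexpect (fun A => f (x \in A)) = q * f true + (1 - q) * f false.
Proof.
rewrite (qexpect_cond x) -(qexpect_const (f true)) -(qexpect_const (f false)).
by congr (_ * _ + _ * _); apply: eq_qexpect => A; rewrite !inE eqxx.
Qed.

Lemma qexpect_mem2 (x y : T) (f : bool -> bool -> R) : x != y ->
  qexpect (fun A => f (x \in A) (y \in A)) =
  q * (q * f true true + (1 - q) * f true false)
  + (1 - q) * (q * f false true + (1 - q) * f false false).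
Proof.
move=> xy; rewrite (qexpect_cond x) -(qexpect_mem y (f true)) -(qexpect_mem y (f false)).
by congr (_ * _ + _ * _); apply: eq_qexpect => A; rewrite !inE eqxx // eq_sym (negbTE xy).
Qed.

Definition supported_on (S : {set T}) (F : {set T} -> R) := forall A, F A = F (A :&: S).

Lemma supported_onS (S S' : {set T}) (F : {set T} -> R) :
  S \subset S' -> supported_on S F -> supported_on S' F.
Proof. by move=> sSS' suppF A; rewrite suppF [RHS]suppF -setIA (setIidPr sSS'). Qed.

Lemma supported_on_notin (S : {set T}) (F : {set T} -> R) (x : T) : x \notin S ->
  supported_on S F -> forall A, F (x |: A) = F A /\ F (A :\ x) = F A.
Proof.
move=> xS suppF A; rewrite suppF [F A]suppF [F (A :\ x)]suppF.
by split; congr F; apply/setP => y; rewrite !inE; case: eqP => // ->; rewrite (negbTE xS) !andbF.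
Qed.

Lemma qexpectM_supported (S : {set T}) (F G : {set T} -> R) :
  supported_on S F -> supported_on (~: S) G ->
  qexpect (fun A => F A * G A) = qexpect F * qexpect G.
Proof.
elim: {S}#|S| {-2}S (eqxx #|S|) F => [|k IH] S cardS F suppF suppG.
  have S0 : S = set0 by apply/eqP; rewrite -cards_eq0.
  have FE A : F A = F set0 by rewrite suppF S0 setI0.
  under eq_qexpect do rewrite FE.
  by rewrite qexpectZ (eq_qexpect FE) qexpect_const.
have [x xS] : exists x, x \in S by apply/set0Pn; rewrite -card_gt0 (eqP cardS).
have cardSx : #|S :\ x| == k by rewrite (cardsD1 x) xS add1n in cardS.
have suppGx : supported_on (~: (S :\ x)) G by apply: supported_onS suppG; rewrite setCS subsetDl.
have /supported_on_notin/(_ suppG) G_x : x \notin ~: S by rewrite inE negbK.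
have suppFU1 : supported_on (S :\ x) (fun A => F (x |: A)).
  move=> A /=; rewrite suppF [RHS]suppF; congr F.
  by apply/setP => y; rewrite !inE; case: (y == x); case: (y \in A); case: (y \in S).
have suppFD1 : supported_on (S :\ x) (fun A => F (A :\ x)).
  move=> A /=; rewrite suppF [RHS]suppF; congr F.
  by apply/setP => y; rewrite !inE; case: (y == x); case: (y \in A); case: (y \in S).
rewrite (qexpect_cond x) [qexpect F](qexpect_cond x).
under eq_qexpect do rewrite (G_x _).1.
under [X in _ + _ * X]eq_qexpect do rewrite (G_x _).2.
by rewrite !(IH (S :\ x)) // !mulrA -mulrDl.
Qed.

Lemma qexpect_prod_supported (I : eqType) (r : seq I) (S : I -> {set T})
    (F : I -> {set T} -> R) :
  uniq r -> (forall i, supported_on (S i) (F i)) ->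
  {in r &, forall i j, i != j -> [disjoint S i & S j]} ->
  qexpect (fun A => \prod_(i <- r) F i A) = \prod_(i <- r) qexpect (F i).
Proof.
elim: r => [|i r IH] /= => [_ _ _ | /andP [ir uniq_r] suppF disjS].
  by under eq_qexpect do rewrite big_nil; rewrite big_nil qexpect_const.
under eq_qexpect do rewrite big_cons.
rewrite big_cons (qexpectM_supported (S := S i)) ?IH //.
  by move=> j k jr kr; apply: disjS; rewrite inE ?jr ?kr orbT.
move=> A; apply: eq_big_seq => j jr; rewrite suppF [RHS]suppF -setIA.
have ij : i != j by apply: contraNneq ir => ->.
have /setIidPr -> // : S j \subset ~: S i.
by rewrite -disjoints_subset disjoint_sym disjS // ?mem_head // inE jr orbT.
Qed.

Hypotheses (q_ge0 : 0 <= q) (q_le1 : q <= 1).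

Lemma qweight_ge0 (A : {set T}) : 0 <= qweight q A.
Proof. by rewrite /qweight mulr_ge0 // exprn_ge0 // subr_ge0. Qed.

Lemma ler_qexpect (F G : {set T} -> R) : (forall A, F A <= G A) -> qexpect F <= qexpect G.
Proof. by move=> leFG; apply: ler_sum => A _; rewrite ler_wpM2l ?qweight_ge0. Qed.
End RandomSubset.

Section PairHits.
Variables (R : realType) (TV TD : finType) (q t : R) (a b : TD -> TV) (I : {set TD}).
Hypothesis a_neq_b : {in I, forall c, a c != b c}.
Hypothesis pairs_disjoint :
  {in I &, forall c c', c != c' -> [disjoint [set a c; b c] & [set a c'; b c']]}.

Lemma qexpect_pair_hits :
  qexpect q (fun V => qexpect q (fun D =>
    t ^+ #|[set c in I | [&& c \in D, a c \in V & b c \in V]]|)) =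
  (1 - q ^+ 3 * (1 - t)) ^+ #|I|.
Proof.
have expr_card (P : pred TD) : t ^+ #|[set c in I | P c]| = \prod_(c <- enum I) t ^+ P c.
  rewrite big_enum -expr_sum -sum1_card; congr (_ ^+ _).
  rewrite [LHS]big_mkcond [RHS]big_mkcond /=.
  by apply: eq_bigr => c _; rewrite inE; case: (c \in I); case: (P c).
under eq_qexpect => V.
  under eq_qexpect do rewrite expr_card.
  rewrite (qexpect_prod_supported q (S := fun c => [set c])) ?enum_uniq //; first last.
  - by move=> c c' _ _ cc'; rewrite disjoints1 inE.
  - by move=> c D; rewrite !inE eqxx andbT.
  under eq_bigr => c _ do rewrite (qexpect_mem q c (fun x => t ^+ [&& x, a c \in V & b c \in V])).
  over.
rewrite (qexpect_prod_supported q (S := fun c => [set a c; b c])) ?enum_uniq //; first last.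
- by move=> c c'; rewrite !mem_enum; apply: pairs_disjoint.
- by move=> c V; rewrite !inE !eqxx /= !orbT !andbT.
rewrite big_enum -prodr_const; apply: eq_bigr => c cI.
rewrite (qexpect_mem2 q (fun x y => q * t ^+ [&& true, x & y] + (1 - q) * t ^+ [&& false, x & y])
                     (a_neq_b cI)) /=.
ring.
Qed.
End PairHits.

Section IndependentSubset.
Variables (T : finType) (conflict : rel T) (d : nat).
Hypothesis conflict_degree :
  forall x, (#|[set y | conflict x y || conflict y x]| <= d)%N.

Lemma exists_independent_subset (X : {set T}) : exists I : {set T},
  [/\ I \subset X, {in I &, forall x y, x != y -> ~~ conflict x y}
    & (#|X| <= d.+1 * #|I|)%N].
Proof.
have [k cardX] : exists k, (#|X| <= k)%N by exists #|X|.
elim: k X cardX => [|k IH] X cardX.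
  by exists set0; rewrite sub0set cards0 muln0; split => // x; rewrite inE.
have [-> | [x xX]] := set_0Vmem X.
  by exists set0; split => [|x|]; rewrite ?sub0set ?inE ?cards0.
set N := [set y | conflict x y || conflict y x].
set X' := (X :\ x) :\: N.
have sX'X : X' \subset X :\ x by apply: subsetDl.
have [|I' [sI'X' indepI' cardI']] := IH X'.
  by move: cardX (subset_leq_card sX'X); rewrite (cardsD1 x X) xX; lia.
have xI' : x \notin I'.
  by apply: contraTN (subset_trans sI'X' sX'X) => xI; apply/subsetPn; exists x; rewrite // !inE eqxx.
exists (x |: I'); split.
- rewrite subUset sub1set xX; apply: subset_trans sI'X' _.
  exact: subset_trans sX'X (subsetDl _ _).
- have noN y : y \in I' -> (conflict x y || conflict y x) = false.
    by move=> /(subsetP sI'X'); rewrite !inE => /andP [/negbTE].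
  move=> y z; rewrite !inE => /predU1P [-> | yI'] /predU1P [-> | zI']; rewrite ?eqxx //.
  + by move=> _; have := noN z zI'; case: (conflict x z).
  + by move=> _; have := noN y yI'; rewrite orbC; case: (conflict y x).
  + exact: indepI'.
- rewrite cardsU1 xI' mulnS.
  have sX : X \subset X' :|: (x |: N).
    by apply/subsetP => y yX; rewrite !inE yX; case: (y == x); case: (conflict x y); case: (conflict y x).
  have := leq_trans (subset_leq_card sX) (leq_card_setU _ _).
  have : (#|x |: N| <= d.+1)%N by rewrite cardsU1 -add1n leq_add ?leq_b1 ?conflict_degree.
  lia.
Qed.
End IndependentSubset.

Section TwoFactorization.
Variables (n : nat) (C : finType) (col : vert n -> vert n -> C).
Hypothesis col_2fact : two_factorization col.

Lemma card_colours : #|C| = n.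
Proof.
have [_ deg2] := col_2fact.
have vert_gt0 : (0 < 2 * n + 1)%N by rewrite addn1.
pose u : vert n := Ordinal vert_gt0.
have : (\sum_(x in [set~ u]) 1 = 2 * n)%N by rewrite sum1_card cardsC1 card_ord addn1.
rewrite (partition_big (col u) predT) //= (eq_bigr (fun _ => 2%N)).
  by rewrite sum_nat_const cardT -cardE; lia.
by move=> c _; rewrite -[RHS](deg2 u c) sum1dep_card; apply: eq_card => x; rewrite !inE.
Qed.

Definition other_nbr (v w : vert n) (c : C) : vert n :=
  odflt v [pick x | [&& x != v, col v x == c & x != w]].

Lemma other_nbrP (v w : vert n) (c : C) : let x := other_nbr v w c in
  [/\ x != v, col v x = c & x != w].
Proof.
rewrite /other_nbr; case: pickP => [x /and3P [xv /eqP vxc xw] // | none].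
have [_ deg2] := col_2fact.
have : [set x | (x != v) && (col v x == c)] \subset [set w].
  by apply/subsetP => x; rewrite !inE => vx; apply: contraFT (none x) => xw; rewrite andbA vx.
by move/subset_leq_card; rewrite deg2 cards1.
Qed.

Lemma other_nbr_inj (v : vert n) (w : C -> vert n) : injective (fun c => other_nbr v (w c) c).
Proof.
move=> c c' /= eq_nbr; have [_ <- _] := other_nbrP v (w c) c.
by have [_ <- _] := other_nbrP v (w c') c'; rewrite eq_nbr.
Qed.

Definition common_colours (V : {set vert n}) (D : {set C}) (u v : vert n) : nat :=
  #|[set c in D | has_col_nbr col V u c && has_col_nbr col V v c]|.

Variables (u v : vert n).

Definition u_nbr (c : C) : vert n := other_nbr u u c.
Definition v_nbr (c : C) : vert n := other_nbr v (u_nbr c) c.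

Lemma u_nbr_neq_v_nbr (c : C) : u_nbr c != v_nbr c.
Proof. by have [_ _] := other_nbrP v (u_nbr c) c; rewrite eq_sym. Qed.

Lemma card_hits_le_common (I : {set C}) (V : {set vert n}) (D : {set C}) :
  (#|[set c in I | [&& c \in D, u_nbr c \in V & v_nbr c \in V]]| <= common_colours V D u v)%N.
Proof.
apply/subset_leq_card/subsetP => c; rewrite !inE => /andP [_ /and3P [cD uV vV]].
rewrite cD /=; apply/andP; split; apply/existsP.
  by exists (u_nbr c); have [nu col_u _] := other_nbrP u u c; rewrite uV /u_nbr nu col_u eqxx.
by exists (v_nbr c); have [nv col_v _] := other_nbrP v (u_nbr c) c; rewrite vV /v_nbr nv col_v eqxx.
Qed.

(* Only the coincidences u_nbr c = v_nbr c' can make two pairs meet, and each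
   colour is involved in at most two of them. *)
Lemma exists_spread_colours : exists I : {set C},
  (n <= 3 * #|I|)%N /\
  {in I &, forall c c', c != c' -> [disjoint [set u_nbr c; v_nbr c] & [set u_nbr c'; v_nbr c']]}.
Proof.
pose conflict c c' := u_nbr c == v_nbr c'.
have u_nbr_inj : injective u_nbr := other_nbr_inj (w := fun=> u).
have v_nbr_inj : injective v_nbr := other_nbr_inj (w := u_nbr).
have card_fibre_le1 (f : C -> vert n) x : injective f -> (#|[set c | f c == x]| <= 1)%N.
  by move=> f_inj; apply/card_le1_eqP => c1 c2; rewrite !inE => /eqP <- /eqP /f_inj.
have conflict_degree c : (#|[set c' | conflict c c' || conflict c' c]| <= 2)%N.
  have sub : [set c' | conflict c c' || conflict c' c]
             \subset [set c' | v_nbr c' == u_nbr c] :|: [set c' | u_nbr c' == v_nbr c].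
    by apply/subsetP => c'; rewrite !inE /conflict eq_sym.
  apply: leq_trans (subset_leq_card sub) _; apply: leq_trans (leq_card_setU _ _) _.
  exact: leq_add (card_fibre_le1 _ _ v_nbr_inj) (card_fibre_le1 _ _ u_nbr_inj).
have [I [_ indepI cardI]] := exists_independent_subset conflict_degree [set: C].
exists I; split; first by rewrite -card_colours // -cardsT.
move=> c c' cI c'I cc'.
have ne_uu : u_nbr c != u_nbr c' by apply: contra cc' => /eqP/u_nbr_inj->.
have ne_vv : v_nbr c != v_nbr c' by apply: contra cc' => /eqP/v_nbr_inj->.
have ne_uv : u_nbr c != v_nbr c' := indepI c c' cI c'I cc'.
have ne_vu : v_nbr c != u_nbr c' by rewrite eq_sym indepI // eq_sym.
rewrite disjoint_subset; apply/subsetP => x; rewrite !inE => /orP [] /eqP ->.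
  by rewrite negb_or ne_uu ne_uv.
by rewrite negb_or ne_vu ne_vv.
Qed.
End TwoFactorization.

Lemma bernoulli_le1 (R : realDomainType) (y : R) (m : nat) : 0 <= y <= 1 ->
  (1 - y) ^+ m * (1 + m%:R * y) <= 1.
Proof.
move=> /andP [y_ge0 y_le1]; elim: m => [|m IH]; first by rewrite expr0 mul0r addr0 mulr1.
have p_ge0 : 0 <= (1 - y) ^+ m by rewrite exprn_ge0 // subr_ge0.
move: IH; rewrite exprSr -mulrA -natr1; set p := _ ^+ m.
have : 0 <= p * ((m%:R + 1) * y ^+ 2) by rewrite !mulr_ge0 ?sqr_ge0 // addr_ge0.
lra.
Qed.

Lemma exists_exprn_le (R : archiRealFieldType) (x e : R) : 0 <= x < 1 -> 0 < e ->
  exists m, x ^+ m <= e.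
Proof.
move=> /andP [x_ge0 x_lt1] e_gt0; set y := 1 - x.
have y_gt0 : 0 < y by rewrite subr_gt0.
have /archi_boundP : 0 <= (e * y)^-1 by rewrite invr_ge0 ltW // mulr_gt0.
set m := Num.bound _ => ltm; exists m.
have ey_gt0 : 0 < e * y by rewrite mulr_gt0.
have : 1 < e * y * m%:R by rewrite -(ltr_pM2l ey_gt0) mulfV ?gt_eqF in ltm.
have : x ^+ m * (1 + m%:R * y) <= 1.
  have -> : x = 1 - y by rewrite /y; ring.
  by apply: bernoulli_le1; rewrite /y; apply/andP; split; lra.
have : 0 <= x ^+ m by rewrite exprn_ge0.
nra.
Qed.

Lemma cube_le_exp2 (J : nat) : (J.+1 ^ 3 <= 8 * 2 ^ J)%N.
Proof.
elim: J => [|J IH] //; have [J_le2 | J_gt2] := leqP J 2; first by case: J J_le2 {IH} => [|[|[|]]].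
have : (J.+2 ^ 3 <= 2 * J.+1 ^ 3)%N by rewrite !expnS expn0; nia.
move: IH; rewrite (expnS 2 J); set a := (J.+1 ^ 3)%N; set b := (J.+2 ^ 3)%N; set p := (2 ^ J)%N.
lia.
Qed.

Lemma sqr_le_exp2_div (n M E : nat) : (0 < M)%N -> (M * (32 * E * M ^ 2) <= n)%N ->
  ((2 * n + 1) ^ 2 * E <= 2 ^ (n %/ M))%N.
Proof.
move=> M_gt0 n_ge; set J := (n %/ M)%N.
have n_lt : (n < J.+1 * M)%N by apply: ltn_ceil.
have J_ge : (32 * E * M ^ 2 <= J)%N by rewrite -(mulKn (32 * E * M ^ 2) M_gt0) leq_div2r.
have le1 : ((2 * n + 1) ^ 2 * E <= (2 * M * J.+1) ^ 2 * E)%N by rewrite leq_mul2r leq_exp2r //; lia.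
have le2 : (8 * ((2 * M * J.+1) ^ 2 * E) <= J.+1 ^ 3)%N.
  have -> : (8 * ((2 * M * J.+1) ^ 2 * E) = 32 * E * M ^ 2 * J.+1 ^ 2)%N by rewrite !expnS expn0; lia.
  by rewrite (expnS _ 2) leq_mul2r (leqW J_ge) orbT.
have := cube_le_exp2 J; lia.
Qed.

Lemma union_bound (R : numDomainType) (I : finType) (P : pred I) :
  1 - ([forall i, P i])%:R <= \sum_i (1 - (P i)%:R) :> R.
Proof.
have term_ge0 i : 0 <= 1 - (P i)%:R :> R by case: (P i); rewrite ?subrr ?subr0.
have [_ | /forallPn [i nPi]] := boolP [forall i, P i]; first by rewrite subrr sumr_ge0.
by rewrite (bigD1 i) //= (negbTE nPi) subr0 lerDl sumr_ge0.
Qed.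

Lemma indicator_lt_le_exp2 (R : realFieldType) (s : R) (Z Y J : nat) :
  (Z <= Y)%N -> s < J.+1%:R -> 1 - (s <= Y%:R)%R%:R <= 2 ^+ J * 2^-1 ^+ Z :> R.
Proof.
move=> ZY sJ; have [_ | Ys] := leP s Y%:R; first by rewrite subrr mulr_ge0 // exprn_ge0 // invr_ge0.
have ZJ : (Z <= J)%N by rewrite -ltnS -(ltr_nat R) (le_lt_trans _ (lt_trans Ys sJ)) // ler_nat.
apply: le_trans (_ : 2 ^+ J * 2^-1 ^+ J <= _).
  by rewrite subr0 -exprMn mulfV ?expr1n // pnatr_eq0.
by rewrite ler_wpM2l ?exprn_ge0 //; apply: ler_wiXn2l ZJ; rewrite ?invr_ge0 // invf_le1 ?ler1n.
Qed.

Definition many_common_colours (R : realType) (n : nat) (C : finType)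
    (col : vert n -> vert n -> C) (eta : R) (V : {set vert n}) (D : {set C}) (u v : vert n) : bool :=
  eta * n%:R <= (common_colours col V D u v)%:R.

Lemma pair_failure_le (R : realType) (n : nat) (C : finType) (col : vert n -> vert n -> C)
    (u v : vert n) (mu eta : R) (m J : nat) :
  two_factorization col -> 0 <= mu <= 1 -> (1 - mu ^+ 3 / 2) ^+ m <= 4^-1 ->
  eta * n%:R < J.+1%:R -> (3 * m * J <= n)%N ->
  qexpect mu (fun V => qexpect mu (fun D =>
    1 - (many_common_colours col eta V D u v)%:R)) <= 2^-1 ^+ J.
Proof.
move=> col_2fact /andP [mu_ge0 mu_le1] rho_m eta_n mJ_le.
have [I [cardI disjI]] := exists_spread_colours col_2fact u v.
apply: le_trans (ler_qexpect mu_ge0 mu_le1 (fun V => ler_qexpect mu_ge0 mu_le1 (fun D =>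
  indicator_lt_le_exp2 (card_hits_le_common col_2fact u v I V D) eta_n))) _.
under eq_qexpect do rewrite qexpectZ.
rewrite qexpectZ qexpect_pair_hits; last 2 first.
- by move=> c _; apply: u_nbr_neq_v_nbr.
- exact: disjI.
have -> : 1 - 2^-1 = 2^-1 :> R by field.
have mu3_ge0 : 0 <= mu ^+ 3 by rewrite exprn_ge0.
have mu3_le1 : mu ^+ 3 <= 1 by rewrite exprn_ile1.
have rho_ge0 : 0 <= 1 - mu ^+ 3 / 2 by lra.
have rho_le1 : 1 - mu ^+ 3 / 2 <= 1 by lra.
have mJ_le_I : (m * J <= #|I|)%N by lia.
apply: le_trans (_ : 2 ^+ J * (4^-1) ^+ J <= _); last first.
  by rewrite -exprMn (_ : 2 * 4^-1 = 2^-1 :> R) //; field.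
rewrite ler_wpM2l ?exprn_ge0 //; apply: le_trans (ler_wiXn2l rho_ge0 rho_le1 mJ_le_I) _.
by rewrite exprM lerXn2r // nnegrE ?exprn_ge0 ?invr_ge0.
Qed.

Lemma prob_bad_le_sum (R : realType) (n : nat) (C : finType) (col : vert n -> vert n -> C)
    (mu eta : R) : 0 <= mu <= 1 ->
  1 - prob_good col mu eta <= \sum_(u : vert n) \sum_(v : vert n)
    qexpect mu (fun V => qexpect mu (fun D => 1 - (many_common_colours col eta V D u v)%:R)).
Proof.
move=> /andP [mu_ge0 mu_le1].
have -> : prob_good col mu eta = qexpect mu (fun V => qexpect mu (fun D => (good_event col eta V D)%:R)).
  by apply: eq_bigr => V _; rewrite mulr_sumr; apply: eq_bigr => D _; rewrite mulrA.
rewrite -[1 in X in X <= _](qexpect_const (vert n) mu) -qexpectB.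
rewrite (@eq_qexpect _ _ mu _ (fun V => qexpect mu (fun D => 1 - (good_event col eta V D)%:R))); last first.
  by move=> V; rewrite qexpectB; congr (_ - _); rewrite qexpect_const.
under [in X in _ <= X]eq_bigr do rewrite -qexpect_sum.
rewrite -qexpect_sum; apply: ler_qexpect => // V.
under eq_bigr do rewrite -qexpect_sum.
rewrite -qexpect_sum; apply: ler_qexpect => // D.
rewrite /good_event.
apply: le_trans (union_bound _ _) _; apply: ler_sum => u _.
apply: le_trans (union_bound _ _) _; apply: ler_sum => v _.
by rewrite lerB // ler_nat; case: (u != v); [exact: leqnn | exact: leq_b1].
Qed.

Lemma natr_mul_half_expn_le (R : realFieldType) (eps : R) (K E J : nat) :
  0 < eps -> eps^-1 < E%:R -> (K * E <= 2 ^ J)%N -> K%:R * 2^-1 ^+ J <= eps.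
Proof.
move=> eps_gt0 epsE KE; have E_gt0 : 0 < E%:R :> R by apply: lt_trans epsE; rewrite invr_gt0.
rewrite -(ler_pM2r E_gt0) mulrAC -natrM; apply: le_trans (_ : (2 ^ J)%:R * 2^-1 ^+ J <= _).
  by rewrite ler_wpM2r ?exprn_ge0 ?invr_ge0 // ler_nat.
rewrite natrX -exprMn mulfV ?pnatr_eq0 // expr1n -[X in X <= _](mulfV (lt0r_neq0 eps_gt0)).
by rewrite ler_pM2l // ltW.
Qed.

Theorem lemma3p16 (R : realType) :
  forall mu : R, 0 < mu -> mu <= 1 ->
  exists eta0 : R, 0 < eta0 /\
  forall eta : R, 0 < eta -> eta <= eta0 ->
  forall eps : R, 0 < eps ->
  exists N : nat, forall n : nat, (N <= n)%N ->
  forall (C : finType) (col : vert n -> vert n -> C),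
    two_factorization col ->
    1 - eps <= prob_good col mu eta.
Proof.
move=> mu mu_gt0 mu_le1; have mu01 : 0 <= mu <= 1 by rewrite ltW.
have [m rho_m] : exists m, (1 - mu ^+ 3 / 2) ^+ m <= 4^-1.
  have mu3_gt0 : 0 < mu ^+ 3 by rewrite exprn_gt0.
  have mu3_le1 : mu ^+ 3 <= 1 by rewrite exprn_ile1 // ltW.
  by apply: exists_exprn_le; rewrite ?invr_gt0 //; apply/andP; split; lra.
have M_gt0 : (0 < 3 * m)%N by case: m rho_m => //; rewrite expr0 => rho0; exfalso; lra.
exists (3 * m)%:R^-1; split => [|eta eta_gt0 eta_le eps eps_gt0]; first by rewrite invr_gt0 ltr0n.
have /archi_boundP : 0 <= eps^-1 by rewrite invr_ge0 ltW.
set E := Num.bound _ => epsE.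
exists (3 * m * (32 * E * (3 * m) ^ 2))%N => n n_ge C col col_2fact.
set J := (n %/ (3 * m))%N.
have eta_n : eta * n%:R < J.+1%:R.
  apply: le_lt_trans (_ : n%:R / (3 * m)%:R < _); first by rewrite mulrC ler_wpM2l.
  by rewrite ltr_pdivrMr ?ltr0n // -natrM ltr_nat ltn_ceil.
have mJ_le : (3 * m * J <= n)%N by rewrite mulnC leq_divM.
have := le_trans (prob_bad_le_sum col eta mu01) (ler_sum _ (fun u _ => ler_sum _ (fun v _ =>
  pair_failure_le u v col_2fact mu01 rho_m eta_n mJ_le))).
rewrite !sumr_const card_ord -mulrnA mulnn -[_ *+ (_ ^ 2)]mulr_natl.
move/le_trans/(_ (natr_mul_half_expn_le eps_gt0 epsE (sqr_le_exp2_div M_gt0 n_ge))).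
lra.
Qed.
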